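(* For every $n\ge2$, every $\omega\in[0,1)$, every $l\in[1,n)$, every $r\in(l,n]$ (integers) and every $t\in\mathbb R$, $$\|[\tau_t^n(c_l),a_r^*]\|\ge\big|(e^{-2iH_n(\omega)t})_{l,r}\big|.$$
   Context: Setting: $V_j=\lambda\chi_{[1-\phi^{-1},1)}(j\phi^{-1}+\omega\bmod1)$, $\lambda>0$, $\phi=\frac{1+\sqrt5}2$; $\mathcal H_n=\bigotimes_{j=1}^n\mathbb C^2$; $H_n^{XY}=-\sum_{j=1}^{n-1}(\sigma^x_j\sigma^x_{j+1}+\sigma^y_j\sigma^y_{j+1})+\sum_{j=1}^nV_j\sigma^z_j$; $\tau_t^n(A)=e^{itH_n^{XY}}Ae^{-itH_n^{XY}}$. $a_j=\frac12(\sigma^x_j-i\sigma^y_j)$, $a_j^*$ its adjoint; $c_1=a_1$, $c_j=\sigma^z_1\cdots\sigma^z_{j-1}a_j$. $H_n(\omega)$ is the $n\times n$ real symmetric tridiagonal matrix with diagonal entries $V_1,\dots,V_n$ and all off-diagonal entries (on the first super- and sub-diagonals) equal to $1$; $(M)_{l,r}$ denotes the $(l,r)$ matrix entry. *)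

From Stdlib Require Import Reals Lra Lia Arith ClassicalEpsilon.
Open Scope R_scope.

Record C := mkC { Cre : R; Cim : R }.
Definition C0 : C := mkC 0 0.
Definition C1 : C := mkC 1 0.
Definition Ci : C := mkC 0 1.
Definition RtoC (x : R) : C := mkC x 0.
Definition Cadd (z w : C) : C := mkC (Cre z + Cre w) (Cim z + Cim w).
Definition Copp (z : C) : C := mkC (- Cre z) (- Cim z).
Definition Cmul (z w : C) : C :=
  mkC (Cre z * Cre w - Cim z * Cim w) (Cre z * Cim w + Cim z * Cre w).
Definition Cconj (z : C) : C := mkC (Cre z) (- Cim z).
Definition Cmod (z : C) : R := sqrt (Cre z ^ 2 + Cim z ^ 2).

Fixpoint csum (N : nat) (f : nat -> C) : C :=
  match N with O => C0 | S m => Cadd (csum m f) (f m) end.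

(* ---------- matrices (0-based indices; dimension passed explicitly) ---------- *)
Definition Mat := nat -> nat -> C.
Definition Vec := nat -> C.
Definition mzero : Mat := fun _ _ => C0.
Definition mid : Mat := fun i j => if Nat.eqb i j then C1 else C0.
Definition madd (A B : Mat) : Mat := fun i j => Cadd (A i j) (B i j).
Definition mscale (c : C) (A : Mat) : Mat := fun i j => Cmul c (A i j).
Definition msub (A B : Mat) : Mat := madd A (mscale (RtoC (-1)) B).
Definition madj (A : Mat) : Mat := fun i j => Cconj (A j i).
Definition mmul (N : nat) (A B : Mat) : Mat :=
  fun i j => csum N (fun k => Cmul (A i k) (B k j)).
Definition mapply (N : nat) (A : Mat) (v : Vec) : Vec :=
  fun i => csum N (fun k => Cmul (A i k) (v k)).
Definition comm (N : nat) (X Y : Mat) : Mat := msub (mmul N X Y) (mmul N Y X).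

Fixpoint mpow (N : nat) (A : Mat) (k : nat) : Mat :=
  match k with O => mid | S k' => mmul N (mpow N A k') A end.

Fixpoint mexp_partial (N : nat) (A : Mat) (m : nat) : Mat :=
  match m with
  | O => mid
  | S m' => madd (mexp_partial N A m') (mscale (RtoC (/ INR (fact m))) (mpow N A m))
  end.

Definition is_mexp (N : nat) (A E : Mat) : Prop :=
  forall i j, (i < N)%nat -> (j < N)%nat ->
    Un_cv (fun m => Cre (mexp_partial N A m i j)) (Cre (E i j)) /\
    Un_cv (fun m => Cim (mexp_partial N A m i j)) (Cim (E i j)).

Definition mexp (N : nat) (A : Mat) : Mat :=
  epsilon (inhabits mzero) (is_mexp N A).

Definition vnorm (N : nat) (v : Vec) : R :=
  sqrt (Cre (csum N (fun k => RtoC (Cmod (v k) ^ 2)))).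
Definition opnorm (N : nat) (A : Mat) : R :=
  epsilon (inhabits 0)
    (is_lub (fun r => exists v : Vec, vnorm N v <= 1 /\ r = vnorm N (mapply N A v))).

Definition phi : R := (1 + sqrt 5) / 2.
Definition chi_int (a b y : R) : R :=
  if Rle_dec a y then (if Rlt_dec y b then 1 else 0) else 0.
Definition V (lam om : R) (j : nat) : R :=
  lam * chi_int (1 - / phi) 1 (frac_part (INR j * / phi + om)).

(* ---------- spin chain on (C^2)^{tensor n}, dimension 2^n ----------
   Basis vector x in [0, 2^n): site j (1-based) carries the bit (j-1) of x;
   bit value 0 / 1 = first / second basis vector of C^2. *)
Definition dimH (n : nat) : nat := 2 ^ n.
Definition bitv (x k : nat) : nat := if Nat.testbit x k then 1%nat else 0%nat.

(* the operator s (a 2x2 matrix) acting on site j, identity elsewhere *)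
Definition site_op (j : nat) (s : Mat) : Mat :=
  fun x y =>
    if Nat.eqb (Nat.clearbit x (j - 1)) (Nat.clearbit y (j - 1))
    then s (bitv x (j - 1)) (bitv y (j - 1)) else C0.

Definition pauli_x : Mat := fun a b =>
  match a, b with 0,1 | 1,0 => C1 | _,_ => C0 end%nat.
Definition pauli_y : Mat := fun a b =>
  match a, b with 0,1 => Copp Ci | 1,0 => Ci | _,_ => C0 end%nat.
Definition pauli_z : Mat := fun a b =>
  match a, b with 0,0 => C1 | 1,1 => RtoC (-1) | _,_ => C0 end%nat.

Definition sx (j : nat) : Mat := site_op j pauli_x.
Definition sy (j : nat) : Mat := site_op j pauli_y.
Definition sz (j : nat) : Mat := site_op j pauli_z.

Definition a_op (j : nat) : Mat :=
  mscale (RtoC (/ 2)) (msub (sx j) (mscale Ci (sy j))).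
Definition a_star (j : nat) : Mat := madj (a_op j).

Fixpoint zstring (n k : nat) : Mat :=
  match k with O => mid | S k' => mmul (dimH n) (zstring n k') (sz (S k')) end.
Definition c_op (n l : nat) : Mat := mmul (dimH n) (zstring n (l - 1)) (a_op l).

Fixpoint msumf (k : nat) (F : nat -> Mat) : Mat :=
  match k with O => mzero | S k' => madd (msumf k' F) (F k') end.

Definition H_XY (lam om : R) (n : nat) : Mat :=
  let N := dimH n in
  madd
    (mscale (RtoC (-1))
       (msumf (n - 1) (fun i => let j := S i in
          madd (mmul N (sx j) (sx (S j))) (mmul N (sy j) (sy (S j))))))
    (msumf n (fun i => let j := S i in mscale (RtoC (V lam om j)) (sz j))).

Definition tau (lam om : R) (n : nat) (t : R) (A : Mat) : Mat :=
  let N := dimH n in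
  mmul N (mmul N (mexp N (mscale (mkC 0 t) (H_XY lam om n))) A)
         (mexp N (mscale (mkC 0 (- t)) (H_XY lam om n))).

(* H_n(omega): n x n tridiagonal, 0-based storage: entry (l,r) (1-based)
   is stored at (l-1, r-1). *)
Definition Hn (lam om : R) (n : nat) : Mat :=
  fun i k => if Nat.eqb i k then RtoC (V lam om (S i))
             else if (Nat.eqb i (S k) || Nat.eqb k (S i))%bool then C1 else C0.

From Pilot Require Import Defs.
From Stdlib Require Import Reals Lra Lia Arith ClassicalEpsilon FunctionalExtensionality Bool.
(* Re-import [Defs] so that its complex numbers [C] shadow [Binomial.C] from [Reals]. *)
Import Defs.
Open Scope R_scope.

(* Apply the commutator to the vacuum Ω, the basis state killed by every a_j.  Since
   H_XY Ω = E_0 Ω and c_l Ω = 0, the term a_r^* τ_t(c_l) Ω vanishes and what remains is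
   e^(itH) c_l e^(-itH) a_r^* Ω.  The one-particle states (-1)^k a_k^* Ω span an invariant
   subspace on which H_XY acts as E_0 + 2 H_n(ω), so e^(-itH) a_r^* Ω is the r-th column of
   e^(-it(E_0 + 2 H_n(ω))) in that basis, and c_l extracts its l-th entry.  The phases
   e^(∓itE_0) cancel, leaving [τ_t(c_l), a_r^*] Ω = ± (e^(-2itH_n(ω)))_(l,r) Ω, and Ω is a unit
   vector. *)

Lemma C_ext (z w : C) : Cre z = Cre w -> Cim z = Cim w -> z = w.
Proof. destruct z, w; simpl; intros -> ->; reflexivity. Qed.

Definition Csub (z w : C) : C := Cadd z (Copp w).

Lemma C_ring_theory : ring_theory C0 C1 Cadd Cmul Csub Copp (@eq C).
Proof.
  constructor; intros; apply C_ext; destruct x; try destruct y; try destruct z;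
  simpl; ring.
Qed.
Add Ring C_ring : C_ring_theory.

Ltac Csimpl := apply C_ext; simpl; ring.

Lemma Cmod_ge0 z : 0 <= Cmod z.
Proof. apply sqrt_pos. Qed.

Lemma Cmod_mul z w : Cmod (Cmul z w) = Cmod z * Cmod w.
Proof.
  destruct z as [a b], w as [c d]; unfold Cmod; simpl.
  rewrite <- sqrt_mult by nra. f_equal. ring.
Qed.

Lemma Cmod_triangle z w : Cmod (Cadd z w) <= Cmod z + Cmod w.
Proof.
  destruct z as [a b], w as [c d]; unfold Cmod; cbn [Cre Cim Cadd].
  set (x := sqrt (a^2+b^2)); set (y := sqrt (c^2+d^2)).
  assert (hx : 0 <= x) by apply sqrt_pos. assert (hy : 0 <= y) by apply sqrt_pos.
  assert (hx2 : x*x = a^2+b^2) by (apply sqrt_sqrt; nra).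
  assert (hy2 : y*y = c^2+d^2) by (apply sqrt_sqrt; nra).
  assert (cauchy_schwarz : a*c+b*d <= x*y).
  { destruct (Rle_dec (a*c+b*d) 0); [nra|].
    apply Rsqr_incr_0_var; [|nra]. unfold Rsqr.
    replace (x*y*(x*y)) with ((x*x)*(y*y)) by ring. rewrite hx2, hy2.
    assert (0 <= (a*d-b*c)^2) by apply pow2_ge_0. nra. }
  rewrite <- (sqrt_Rsqr (x+y)) by lra. apply sqrt_le_1_alt. unfold Rsqr. nra.
Qed.

Lemma Cmod_Cre_le z : Rabs (Cre z) <= Cmod z.
Proof.
  destruct z as [a b]; unfold Cmod; cbn [Cre Cim]. rewrite <- sqrt_Rsqr_abs.
  apply sqrt_le_1_alt. unfold Rsqr. nra.
Qed.

Lemma Cmod_Cim_le z : Rabs (Cim z) <= Cmod z.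
Proof.
  destruct z as [a b]; unfold Cmod; cbn [Cre Cim]. rewrite <- sqrt_Rsqr_abs.
  apply sqrt_le_1_alt. unfold Rsqr. nra.
Qed.

Lemma Cmod_RtoC x : Cmod (RtoC x) = Rabs x.
Proof. unfold Cmod; simpl. rewrite <- sqrt_Rsqr_abs. f_equal. unfold Rsqr; ring. Qed.

Lemma Cmod_C1 : Cmod C1 = 1.
Proof. unfold Cmod; cbn [Cre Cim C1]. replace (1^2 + 0^2) with 1 by ring. apply sqrt_1. Qed.

Lemma Cmod_C0 : Cmod C0 = 0.
Proof. unfold Cmod; cbn [Cre Cim C0]. replace (0^2 + 0^2) with 0 by ring. apply sqrt_0. Qed.

Lemma Cmod_opp z : Cmod (Copp z) = Cmod z.
Proof. destruct z; unfold Cmod; simpl. f_equal; ring. Qed.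

Fixpoint Cpow (c : C) (k : nat) : C :=
  match k with O => C1 | S k' => Cmul (Cpow c k') c end.

Lemma Cmod_Cpow c k : Cmod (Cpow c k) = Cmod c ^ k.
Proof. induction k; simpl. apply Cmod_C1. rewrite Cmod_mul, IHk. ring. Qed.

Lemma Cpow_RtoC x k : Cpow (RtoC x) k = RtoC (x ^ k).
Proof. induction k; simpl; [reflexivity|]. rewrite IHk. Csimpl. Qed.

Definition sg (m : nat) : C := RtoC ((-1) ^ m).

Lemma sg_S m : sg (S m) = Cmul (RtoC (-1)) (sg m).
Proof. Csimpl. Qed.

Lemma sg_mul_sg m : Cmul (sg m) (sg m) = C1.
Proof.
  apply C_ext; simpl; [|ring].
  rewrite Rmult_0_l, Rminus_0_r, <- Rpow_mult_distr.
  replace (-1 * -1) with 1 by ring. apply pow1.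
Qed.

Lemma Cmod_sg m : Cmod (sg m) = 1.
Proof.
  unfold sg. rewrite Cmod_RtoC, <- RPow_abs, Rabs_left by lra.
  replace (- -1) with 1 by ring. apply pow1.
Qed.

Lemma csum_ext N f g : (forall k, (k < N)%nat -> f k = g k) -> csum N f = csum N g.
Proof.
  induction N; simpl; intros H; auto.
  rewrite IHN, H; auto.
Qed.

Lemma csum_add N f g :
  csum N (fun k => Cadd (f k) (g k)) = Cadd (csum N f) (csum N g).
Proof. induction N; simpl. Csimpl. rewrite IHN. ring. Qed.

Lemma csum_mul_l N c f : csum N (fun k => Cmul c (f k)) = Cmul c (csum N f).
Proof. induction N; simpl. Csimpl. rewrite IHN. ring. Qed.

Lemma csum_mul_r N c f : csum N (fun k => Cmul (f k) c) = Cmul (csum N f) c.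
Proof. induction N; simpl. Csimpl. rewrite IHN. ring. Qed.

Lemma csum_0 N : csum N (fun _ => C0) = C0.
Proof. induction N; simpl; auto. rewrite IHN. ring. Qed.

Lemma csum_eq_0 N f : (forall k, (k < N)%nat -> f k = C0) -> csum N f = C0.
Proof. intros H. rewrite <- (csum_0 N). now apply csum_ext. Qed.

Lemma csum_swap N M (f : nat -> nat -> C) :
  csum N (fun i => csum M (f i)) = csum M (fun j => csum N (fun i => f i j)).
Proof.
  induction N; simpl. now rewrite csum_0.
  rewrite IHN, <- csum_add. reflexivity.
Qed.

Lemma csum_mul_csum M K f g :
  Cmul (csum M f) (csum K g) = csum M (fun a => csum K (fun q => Cmul (f a) (g q))).
Proof.
  rewrite <- csum_mul_r. apply csum_ext; intros. now rewrite <- csum_mul_l.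
Qed.

Lemma csum_delta N a f :
  csum N (fun k => if Nat.eqb k a then f k else C0) = if Nat.ltb a N then f a else C0.
Proof.
  induction N; simpl; [reflexivity|]. rewrite IHN.
  destruct (Nat.eqb_spec N a), (Nat.ltb_spec a N), (Nat.ltb_spec a (S N));
    subst; try lia; ring.
Qed.

Lemma csum_delta_lt N a f : (a < N)%nat ->
  csum N (fun k => if Nat.eqb k a then f k else C0) = f a.
Proof. intros Ha. rewrite csum_delta. now destruct (Nat.ltb_spec a N); try lia. Qed.

Lemma csum_last N f : csum (S N) f = Cadd (csum N f) (f N).
Proof. reflexivity. Qed.

Lemma csum_shift N f : csum (S N) f = Cadd (f 0%nat) (csum N (fun k => f (S k))).
Proof. induction N; simpl. ring. simpl in IHN. rewrite IHN. ring. Qed.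

Fixpoint rsum (N : nat) (f : nat -> R) : R :=
  match N with O => 0 | S m => rsum m f + f m end.

Lemma rsum_ext N f g : (forall k, (k < N)%nat -> f k = g k) -> rsum N f = rsum N g.
Proof.
  induction N; simpl; intros H; auto.
  rewrite IHN, H; auto.
Qed.

Lemma rsum_le N f g : (forall k, (k < N)%nat -> f k <= g k) -> rsum N f <= rsum N g.
Proof.
  induction N; simpl; intros H; [lra|].
  specialize (IHN (fun k h => H k ltac:(lia))). specialize (H N ltac:(lia)). lra.
Qed.

Lemma rsum_0 N : rsum N (fun _ => 0) = 0.
Proof. induction N; simpl; lra. Qed.

Lemma rsum_ge0 N f : (forall k, (k < N)%nat -> 0 <= f k) -> 0 <= rsum N f.
Proof.
  intros H. rewrite <- (rsum_0 N). now apply rsum_le.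
Qed.

Lemma rsum_term_le N f a : (a < N)%nat -> (forall k, (k < N)%nat -> 0 <= f k) ->
  f a <= rsum N f.
Proof.
  induction N; intros Ha H; [lia|]. simpl.
  assert (0 <= f N) by (apply H; lia).
  destruct (Nat.eq_dec a N) as [->|].
  - pose proof (rsum_ge0 N f (fun k h => H k ltac:(lia))). lra.
  - specialize (IHN ltac:(lia) (fun k h => H k ltac:(lia))). lra.
Qed.

Lemma rsum_mul_l N c f : rsum N (fun k => c * f k) = c * rsum N f.
Proof. induction N; simpl. ring. rewrite IHN. ring. Qed.

Lemma rsum_delta N x a : (x < N)%nat -> rsum N (fun k => if Nat.eqb k x then a else 0) = a.
Proof.
  induction N; simpl; intros Hx; [lia|].
  destruct (Nat.eqb_spec N x) as [->|].
  - rewrite (rsum_ext _ _ (fun _ => 0)); [|intros k Hk; destruct (Nat.eqb_spec k x); [lia|reflexivity]].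
    rewrite rsum_0. ring.
  - rewrite IHN by lia. ring.
Qed.

Lemma rsum_sum_f_R0 p f : rsum (S p) f = sum_f_R0 f p.
Proof. induction p; simpl in *. ring. now rewrite IHp. Qed.

Lemma Cre_csum N f : Cre (csum N f) = rsum N (fun k => Cre (f k)).
Proof. induction N; simpl; auto. now rewrite IHN. Qed.

Lemma Cim_csum N f : Cim (csum N f) = rsum N (fun k => Cim (f k)).
Proof. induction N; simpl; auto. now rewrite IHN. Qed.

Lemma Cmod_csum_le N f : Cmod (csum N f) <= rsum N (fun k => Cmod (f k)).
Proof.
  induction N; simpl. rewrite Cmod_C0; lra.
  eapply Rle_trans. apply Cmod_triangle. lra.
Qed.

Definition Ccv (u : nat -> C) (z : C) : Prop :=
  Un_cv (fun m => Cre (u m)) (Cre z) /\ Un_cv (fun m => Cim (u m)) (Cim z).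

Lemma Un_cv_const c : Un_cv (fun _ => c) c.
Proof. intros e He. exists 0%nat. intros. unfold Rdist. now rewrite Rminus_diag, Rabs_R0. Qed.

Lemma Un_cv_close (u v d : nat -> R) a : Un_cv v a -> Un_cv d 0 ->
  (forall m, Rabs (u m - v m) <= d m) -> Un_cv u a.
Proof.
  intros Hv Hd H e He.
  destruct (Hv (e/2) ltac:(lra)) as [N1 HN1], (Hd (e/2) ltac:(lra)) as [N2 HN2].
  exists (max N1 N2); intros m Hm.
  specialize (HN1 m ltac:(lia)); specialize (HN2 m ltac:(lia)); specialize (H m).
  unfold Rdist in *. rewrite Rminus_0_r in HN2.
  replace (u m - a) with ((u m - v m) + (v m - a)) by ring.
  pose proof (Rabs_triang (u m - v m) (v m - a)). pose proof (Rle_abs (d m)). lra.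
Qed.

Lemma Ccv_const c : Ccv (fun _ => c) c.
Proof. split; apply Un_cv_const. Qed.

Lemma Ccv_mul u v a b : Ccv u a -> Ccv v b -> Ccv (fun m => Cmul (u m) (v m)) (Cmul a b).
Proof.
  intros [h1 h2] [h3 h4]; split; simpl.
  - apply CV_minus; apply CV_mult; auto.
  - apply CV_plus; apply CV_mult; auto.
Qed.

Lemma Ccv_ext u v a : (forall m, u m = v m) -> Ccv u a -> Ccv v a.
Proof.
  intros H [h1 h2]; split; (eapply Un_cv_ext; [|eassumption]); intros; simpl; now rewrite H.
Qed.

Lemma Ccv_unique u a b : Ccv u a -> Ccv u b -> a = b.
Proof. intros [h1 h2] [h3 h4]. apply C_ext; eapply UL_sequence; eauto. Qed.

Lemma Ccv_csum K (f : nat -> nat -> C) (l : nat -> C) :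
  (forall k, (k < K)%nat -> Ccv (fun m => f m k) (l k)) ->
  Ccv (fun m => csum K (f m)) (csum K l).
Proof.
  induction K; intros H; simpl. apply Ccv_const.
  destruct (IHK (fun k h => H k ltac:(lia))) as [h1 h2], (H K ltac:(lia)) as [h3 h4].
  split; simpl; apply CV_plus; auto.
Qed.

Lemma Ccv_close u v a d : Ccv v a -> Un_cv d 0 ->
  (forall m, Cmod (Csub (u m) (v m)) <= d m) -> Ccv u a.
Proof.
  intros [h1 h2] hd H. split.
  - apply (Un_cv_close _ (fun m => Cre (v m)) d); auto; intros m.
    apply (Rle_trans _ _ _ (Cmod_Cre_le (Csub (u m) (v m)))); auto.
  - apply (Un_cv_close _ (fun m => Cim (v m)) d); auto; intros m.
    apply (Rle_trans _ _ _ (Cmod_Cim_le (Csub (u m) (v m)))); auto.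
Qed.

(** * The matrix exponential *)

Definition matnorm N (A : Mat) : R := rsum N (fun i => rsum N (fun j => Cmod (A i j))).

Lemma matnorm_ge0 N A : 0 <= matnorm N A.
Proof. apply rsum_ge0; intros; apply rsum_ge0; intros; apply Cmod_ge0. Qed.

Lemma colsum_le_matnorm N A j : (j < N)%nat -> rsum N (fun i => Cmod (A i j)) <= matnorm N A.
Proof.
  intros Hj. apply rsum_le. intros i Hi.
  apply (rsum_term_le N (fun j => Cmod (A i j))); auto. intros; apply Cmod_ge0.
Qed.

Lemma Cmod_mid_le i j : Cmod (mid i j) <= 1.
Proof. unfold mid. destruct (Nat.eqb i j). rewrite Cmod_C1; lra. rewrite Cmod_C0; lra. Qed.

Lemma Cmod_mpow_le N A k i j : (j < N)%nat -> Cmod (mpow N A k i j) <= matnorm N A ^ k.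
Proof.
  revert j. induction k; intros j Hj; simpl. apply Cmod_mid_le.
  eapply Rle_trans. apply Cmod_csum_le.
  eapply Rle_trans. apply (rsum_le _ _ (fun l => matnorm N A ^ k * Cmod (A l j))).
  - intros l Hl. rewrite Cmod_mul. apply Rmult_le_compat_r; auto using Cmod_ge0.
  - rewrite rsum_mul_l, Rmult_comm. apply Rmult_le_compat_r.
    + apply pow_le, matnorm_ge0.
    + now apply colsum_le_matnorm.
Qed.

Definition mterm N A k : Mat := mscale (RtoC (/ INR (fact k))) (mpow N A k).

Lemma mexp_partial_csum N A m i j :
  mexp_partial N A m i j = csum (S m) (fun k => mterm N A k i j).
Proof.
  induction m; [|simpl in *; now rewrite <- IHm].
  unfold mterm, mscale; simpl. apply C_ext; simpl; rewrite Rinv_1; ring.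
Qed.

Lemma inv_fact_pos k : 0 < / INR (fact k).
Proof. apply Rinv_0_lt_compat, INR_fact_lt_0. Qed.

Lemma Cmod_mterm_le N A k i j : (j < N)%nat ->
  Cmod (mterm N A k i j) <= / INR (fact k) * matnorm N A ^ k.
Proof.
  intros Hj. unfold mterm, mscale. rewrite Cmod_mul, Cmod_RtoC.
  pose proof (inv_fact_pos k). rewrite Rabs_right by lra.
  apply Rmult_le_compat_l; [lra|]. now apply Cmod_mpow_le.
Qed.

Lemma exp_cv x : Un_cv (fun m => sum_f_R0 (fun k => / INR (fact k) * x ^ k) m) (exp x).
Proof. unfold exp. now destruct (exist_exp x). Qed.

Lemma series_cv_by_abs (a b : nat -> R) : (forall k, Rabs (a k) <= b k) ->
  { l | Un_cv (sum_f_R0 b) l } -> { l | Un_cv (sum_f_R0 a) l }.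
Proof.
  intros H Hb. apply cv_cauchy_2, cauchy_abs, cv_cauchy_1.
  apply (Rseries_CV_comp _ b); auto. intros; split; auto using Rabs_pos.
Qed.

(* Each entry of the exponential series is dominated by the series of [exp (matnorm N A)]. *)
Lemma mexp_partial_entry_cv N A i j : (j < N)%nat ->
  exists z, Ccv (fun m => mexp_partial N A m i j) z.
Proof.
  intros Hj.
  assert (dom : { l | Un_cv (sum_f_R0 (fun k => / INR (fact k) * matnorm N A ^ k)) l })
    by (exists (exp (matnorm N A)); apply exp_cv).
  destruct (series_cv_by_abs (fun k => Cre (mterm N A k i j)) _
    (fun k => Rle_trans _ _ _ (Cmod_Cre_le _) (Cmod_mterm_le N A k i j Hj)) dom) as [x Hx].
  destruct (series_cv_by_abs (fun k => Cim (mterm N A k i j)) _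
    (fun k => Rle_trans _ _ _ (Cmod_Cim_le _) (Cmod_mterm_le N A k i j Hj)) dom) as [y Hy].
  exists (mkC x y). split; simpl.
  - eapply Un_cv_ext; [|exact Hx]. intros m.
    now rewrite mexp_partial_csum, Cre_csum, rsum_sum_f_R0.
  - eapply Un_cv_ext; [|exact Hy]. intros m.
    now rewrite mexp_partial_csum, Cim_csum, rsum_sum_f_R0.
Qed.

Lemma mexp_spec N A : is_mexp N A (mexp N A).
Proof.
  unfold mexp. apply epsilon_spec.
  exists (fun i j => match excluded_middle_informative (j < N)%nat with
     | left h => proj1_sig (constructive_indefinite_description _ (mexp_partial_entry_cv N A i j h))
     | right _ => C0 end).
  intros i j Hi Hj. destruct (excluded_middle_informative (j < N)%nat); [|lia].
  now destruct (constructive_indefinite_description _ _).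
Qed.

Lemma mexp_cv N A i j : (i < N)%nat -> (j < N)%nat ->
  Ccv (fun m => mexp_partial N A m i j) (mexp N A i j).
Proof. intros; now apply mexp_spec. Qed.

Lemma mexp_unique N A i j z : (i < N)%nat -> (j < N)%nat ->
  Ccv (fun m => mexp_partial N A m i j) z -> mexp N A i j = z.
Proof. intros. eapply Ccv_unique; eauto using mexp_cv. Qed.

(* Matrices and vectors are total functions on [nat]; only the first [N] entries matter. *)
Definition veq N (v w : Vec) : Prop := forall i, (i < N)%nat -> v i = w i.

Definition ev (x : nat) : Vec := fun i => if Nat.eqb i x then C1 else C0.

Definition vscale (c : C) (v : Vec) : Vec := fun i => Cmul c (v i).

Definition vcomb m (B : Mat) (v : nat -> Vec) (k : nat) : Vec :=
  fun i => csum m (fun j => Cmul (B j k) (v j i)).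

Lemma mapply_veq N A v w : veq N v w -> mapply N A v = mapply N A w.
Proof.
  intros H. apply functional_extensionality; intros i.
  apply csum_ext; intros; now rewrite H.
Qed.

Lemma mapply_mmul N A B v : mapply N (mmul N A B) v = mapply N A (mapply N B v).
Proof.
  apply functional_extensionality; intros i. unfold mapply, mmul.
  transitivity (csum N (fun k => csum N (fun l => Cmul (A i l) (Cmul (B l k) (v k))))).
  - apply csum_ext; intros. rewrite <- csum_mul_r. apply csum_ext; intros; ring.
  - rewrite csum_swap. apply csum_ext; intros. now rewrite <- csum_mul_l.
Qed.

Lemma mapply_csum N A m (c : nat -> C) (v : nat -> Vec) :
  mapply N A (fun i => csum m (fun j => Cmul (c j) (v j i))) =
  fun i => csum m (fun j => Cmul (c j) (mapply N A (v j) i)).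
Proof.
  apply functional_extensionality; intros i. unfold mapply.
  transitivity (csum N (fun k => csum m (fun j => Cmul (c j) (Cmul (A i k) (v j k))))).
  - apply csum_ext; intros. rewrite <- csum_mul_l. apply csum_ext; intros; ring.
  - rewrite csum_swap. apply csum_ext; intros. now rewrite <- csum_mul_l.
Qed.

Lemma mapply_mscale N c A v : mapply N (mscale c A) v = vscale c (mapply N A v).
Proof.
  apply functional_extensionality; intros i. unfold mapply, mscale, vscale.
  rewrite <- csum_mul_l. apply csum_ext; intros; ring.
Qed.

Lemma mapply_vscale N A c v : mapply N A (vscale c v) = vscale c (mapply N A v).
Proof.
  apply functional_extensionality; intros i. unfold mapply, vscale.
  rewrite <- csum_mul_l. apply csum_ext; intros; ring.
Qed.

Lemma mapply_madd N A B v :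
  mapply N (madd A B) v = fun i => Cadd (mapply N A v i) (mapply N B v i).
Proof.
  apply functional_extensionality; intros i. unfold mapply, madd.
  rewrite <- csum_add. apply csum_ext; intros; ring.
Qed.

Lemma mapply_msumf N K F v :
  mapply N (msumf K F) v = fun i => csum K (fun a => mapply N (F a) v i).
Proof.
  induction K; simpl.
  - apply functional_extensionality; intros i. unfold mapply, mzero.
    transitivity (csum N (fun _ => C0)); [apply csum_ext; intros; ring | apply csum_0].
  - now rewrite mapply_madd, IHK.
Qed.

Lemma mapply_zero N A : mapply N A (fun _ => C0) = fun _ => C0.
Proof.
  apply functional_extensionality; intros i. unfold mapply.
  transitivity (csum N (fun _ => C0)); [apply csum_ext; intros; ring | apply csum_0].
Qed.

Lemma mapply_ev N A x : (x < N)%nat -> mapply N A (ev x) = fun i => A i x.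
Proof.
  intros Hx. apply functional_extensionality; intros i. unfold mapply, ev.
  rewrite <- (csum_delta_lt N x (fun k => A i k)) by auto.
  apply csum_ext; intros k _. destruct (Nat.eqb k x); ring.
Qed.

Lemma mapply_mid N v : veq N (mapply N mid v) v.
Proof.
  intros i Hi. unfold mapply, mid.
  rewrite <- (csum_delta_lt N i v) by auto.
  apply csum_ext; intros. rewrite (Nat.eqb_sym i k). destruct (Nat.eqb k i); ring.
Qed.

Lemma vcomb_mid m v k : (k < m)%nat -> vcomb m mid v k = v k.
Proof.
  intros Hk. apply functional_extensionality; intros i. unfold vcomb, mid.
  rewrite <- (csum_delta_lt m k (fun j => v j i)) by auto.
  apply csum_ext; intros j _. destruct (Nat.eqb j k); ring.
Qed.

(** * Exponentials on an invariant family of vectors *)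

Section InvariantFamily.
Variables (N m : nat) (H B : Mat) (v : nat -> Vec) (s : C).
Hypothesis H_family : forall k, (k < m)%nat -> veq N (mapply N H (v k)) (vcomb m B v k).

Lemma mpow_family q k : (k < m)%nat ->
  veq N (mapply N (mpow N (mscale s H) q) (v k)) (vcomb m (mpow m (mscale s B) q) v k).
Proof.
  revert k; induction q; intros k Hk; simpl.
  - rewrite vcomb_mid by auto. apply mapply_mid.
  - rewrite mapply_mmul, mapply_mscale.
    rewrite (mapply_veq N _ (vscale s (mapply N H (v k)))
               (fun i => csum m (fun j => Cmul (Cmul s (B j k)) (v j i)))).
    2:{ intros i Hi. unfold vscale. rewrite H_family by auto. unfold vcomb.
        rewrite <- csum_mul_l. apply csum_ext; intros; ring. }
    rewrite mapply_csum. intros i Hi.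
    transitivity (csum m (fun j => Cmul (Cmul s (B j k)) (vcomb m (mpow m (mscale s B) q) v j i))).
    { apply csum_ext; intros. now rewrite IHq. }
    unfold vcomb, mmul, mscale.
    transitivity (csum m (fun j => csum m (fun l =>
      Cmul (Cmul s (B j k)) (Cmul (mpow m (fun a b => Cmul s (B a b)) q l j) (v l i))))).
    { apply csum_ext; intros. now rewrite <- csum_mul_l. }
    rewrite csum_swap. apply csum_ext; intros. rewrite <- csum_mul_r.
    apply csum_ext; intros. ring.
Qed.

Lemma mexp_partial_family p k : (k < m)%nat ->
  veq N (mapply N (mexp_partial N (mscale s H) p) (v k))
        (vcomb m (mexp_partial m (mscale s B) p) v k).
Proof.
  revert k; induction p; intros k Hk; cbn [mexp_partial].
  - rewrite vcomb_mid by auto. apply mapply_mid.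
  - rewrite mapply_madd, mapply_mscale. intros i Hi. unfold vscale.
    rewrite IHp, mpow_family by auto. unfold vcomb, madd, mscale.
    rewrite <- csum_mul_l, <- csum_add. apply csum_ext; intros; ring.
Qed.

Lemma mexp_family k : (k < m)%nat ->
  veq N (mapply N (mexp N (mscale s H)) (v k)) (vcomb m (mexp m (mscale s B)) v k).
Proof.
  intros Hk i Hi. eapply Ccv_unique.
  - apply Ccv_csum. intros l Hl. apply Ccv_mul; [now apply mexp_cv | apply Ccv_const].
  - eapply Ccv_ext. { intros p. symmetry. apply (mexp_partial_family p k Hk i Hi). }
    apply Ccv_csum. intros j Hj. apply Ccv_mul; [now apply mexp_cv | apply Ccv_const].
Qed.

End InvariantFamily.

(** * Exponential of a scalar shift *)

(* Unlike [Binomial.C], this binomial coefficient vanishes above the diagonal. *)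
Fixpoint binom (k q : nat) : nat :=
  match k, q with
  | _, O => 1%nat
  | O, S _ => 0%nat
  | S k', S q' => (binom k' q' + binom k' (S q'))%nat
  end.

Lemma binom_gt k q : (k < q)%nat -> binom k q = 0%nat.
Proof.
  revert q; induction k; intros q H; destruct q; simpl; try lia; auto.
  rewrite !IHk by lia. auto.
Qed.

Lemma binom_0 k : binom k 0 = 1%nat.
Proof. now destruct k. Qed.

Lemma binom_fact k q : (q <= k)%nat -> (binom k q * fact q * fact (k - q))%nat = fact k.
Proof.
  revert q; induction k; intros q Hq.
  - destruct q; [reflexivity | lia].
  - destruct q as [|q]. { simpl binom. rewrite Nat.sub_0_r. simpl (fact 0). lia. }
    simpl binom. replace (S k - S q)%nat with (k - q)%nat by lia.
    destruct (Nat.eq_dec q k) as [->|].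
    + rewrite (binom_gt k (S k)), Nat.sub_diag by lia.
      pose proof (IHk k (le_n k)) as Hk. rewrite Nat.sub_diag in Hk. simpl fact in *. nia.
    + pose proof (IHk q ltac:(lia)). pose proof (IHk (S q) ltac:(lia)).
      replace (k - q)%nat with (S (k - S q)) in * by lia. simpl fact in *. nia.
Qed.

Lemma binom_div_fact k q : (q <= k)%nat ->
  INR (binom k q) * / INR (fact k) = / INR (fact (k - q)) * / INR (fact q).
Proof.
  intros Hq.
  assert (Hk : INR (fact k) = INR (binom k q) * INR (fact q) * INR (fact (k - q)))
    by (rewrite <- (binom_fact k q Hq), !mult_INR; reflexivity).
  pose proof (INR_fact_neq_0 q). pose proof (INR_fact_neq_0 (k - q)).
  pose proof (INR_fact_neq_0 k).
  assert (INR (binom k q) <> 0) by (intros Z; rewrite Z in Hk; lra).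
  rewrite Hk. field. auto.
Qed.

Definition bsum (k : nat) (c : C) (X : nat -> C) : C :=
  csum (S k) (fun q => Cmul (RtoC (INR (binom k q))) (Cmul (Cpow c (k - q)) (X q))).

Lemma bsum_0 c X : bsum 0 c X = X 0%nat.
Proof. Csimpl. Qed.

(* Pascal's rule, in the form needed for (c + A)^(k+1) = c (c + A)^k + (c + A)^k A. *)
Lemma bsum_S k c X :
  bsum (S k) c X = Cadd (Cmul c (bsum k c X)) (bsum k c (fun q => X (S q))).
Proof.
  set (h := fun q => Cmul (RtoC (INR (binom k (S q)))) (Cmul (Cpow c (k - q)) (X (S q)))).
  assert (upper : Cmul c (bsum k c X) = Cadd (Cmul (Cpow c (S k)) (X 0%nat)) (csum (S k) h)).
  { unfold bsum. rewrite <- csum_mul_l, csum_shift, csum_last.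
    unfold h at 2. rewrite (binom_gt k (S k)), Nat.sub_0_r by lia.
    replace (csum k (fun q => Cmul c (Cmul (RtoC (INR (binom k (S q))))
              (Cmul (Cpow c (k - S q)) (X (S q)))))) with (csum k h).
    - rewrite binom_0. simpl Cpow. simpl INR. Csimpl.
    - apply csum_ext; intros q Hq. unfold h.
      replace (k - q)%nat with (S (k - S q)) by lia. simpl Cpow. ring. }
  rewrite upper. unfold bsum at 1. rewrite csum_shift. simpl binom. rewrite Nat.sub_0_r.
  replace (csum (S k) _) with (Cadd (csum (S k) h) (bsum k c (fun q => X (S q)))).
  - simpl INR. Csimpl.
  - unfold bsum. rewrite <- csum_add. apply csum_ext; intros q Hq. unfold h.
    replace (S k - S q)%nat with (k - q)%nat by lia. rewrite plus_INR. Csimpl.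
Qed.

Lemma bsum_mul_csum k c N (X : nat -> nat -> C) (y : nat -> C) :
  csum N (fun l => Cmul (bsum k c (X l)) (y l)) =
  bsum k c (fun q => csum N (fun l => Cmul (X l q) (y l))).
Proof.
  unfold bsum.
  transitivity (csum N (fun l => csum (S k) (fun q =>
    Cmul (Cmul (RtoC (INR (binom k q))) (Cpow c (k - q))) (Cmul (X l q) (y l))))).
  - apply csum_ext; intros l Hl. rewrite <- csum_mul_r. apply csum_ext; intros; ring.
  - rewrite csum_swap. apply csum_ext; intros q Hq.
    rewrite <- !csum_mul_l. apply csum_ext; intros; ring.
Qed.

Lemma mmul_shift_entry N c P A i j : (j < N)%nat ->
  mmul N P (madd (mscale c mid) A) i j = Cadd (Cmul c (P i j)) (mmul N P A i j).
Proof.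
  intros Hj. unfold mmul, madd, mscale, mid.
  rewrite <- (csum_delta_lt N j (fun l => Cmul c (P i l))), <- csum_add by auto.
  apply csum_ext; intros l Hl. destruct (Nat.eqb l j); ring.
Qed.

Lemma mpow_shift N c A k i j : (j < N)%nat ->
  mpow N (madd (mscale c mid) A) k i j = bsum k c (fun q => mpow N A q i j).
Proof.
  revert j. induction k; intros j Hj.
  - rewrite bsum_0. reflexivity.
  - simpl mpow. rewrite mmul_shift_entry, bsum_S, IHk by auto. f_equal.
    unfold mmul at 1.
    rewrite (csum_ext _ _ (fun l => Cmul (bsum k c (fun q => mpow N A q i l)) (A l j)))
      by (intros; now rewrite IHk).
    now rewrite bsum_mul_csum.
Qed.

(* General term of the Cauchy product of the series of e^c and e^A. *)
Definition prod_term N c A i j (a q : nat) : C :=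
  Cmul (Cmul (Cpow c a) (RtoC (/ INR (fact a)))) (Cmul (mpow N A q i j) (RtoC (/ INR (fact q)))).

Lemma mterm_shift N c A k i j : (j < N)%nat ->
  mterm N (madd (mscale c mid) A) k i j = csum (S k) (fun q => prod_term N c A i j (k - q) q).
Proof.
  intros Hj. unfold mterm, mscale at 1. rewrite mpow_shift by auto.
  unfold bsum. rewrite <- csum_mul_l. apply csum_ext; intros q Hq. unfold prod_term.
  transitivity (Cmul (RtoC (INR (binom k q) * / INR (fact k)))
                     (Cmul (Cpow c (k - q)) (mpow N A q i j))); [Csimpl|].
  rewrite binom_div_fact by lia. Csimpl.
Qed.

Lemma csum_triangle M (T : nat -> nat -> C) :
  csum M (fun k => csum (S k) (fun q => T (k - q)%nat q)) =
  csum M (fun a => csum M (fun q => if Nat.ltb (a + q) M then T a q else C0)).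
Proof.
  induction M; [reflexivity|].
  rewrite csum_last, IHM.
  transitivity (Cadd (csum (S M) (fun a => csum (S M) (fun q => if Nat.ltb (a + q) M then T a q else C0)))
    (csum (S M) (fun q => csum (S M) (fun a => if Nat.eqb a (M - q) then
                                           (if Nat.leb q M then T a q else C0) else C0)))).
  - f_equal.
    + rewrite csum_last, (csum_eq_0 (S M)).
      2:{ intros q _. destruct (Nat.ltb_spec (M + q) M); [lia|auto]. }
      transitivity (csum M (fun a => csum (S M) (fun q => if Nat.ltb (a + q) M then T a q else C0))); [|ring].
      apply csum_ext; intros a Ha. rewrite csum_last.
      destruct (Nat.ltb_spec (a + M) M); [lia|ring].
    + apply csum_ext; intros q Hq. rewrite csum_delta_lt by lia.
      destruct (Nat.leb_spec q M); [auto|lia].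
  - rewrite (csum_swap (S M) (S M) (fun q a => if Nat.eqb a (M - q) then
                                      (if Nat.leb q M then T a q else C0) else C0)).
    rewrite <- csum_add.
    apply csum_ext; intros a Ha. rewrite <- csum_add. apply csum_ext; intros q Hq.
    destruct (Nat.ltb_spec (a + q) (S M)), (Nat.ltb_spec (a + q) M),
      (Nat.eqb_spec a (M - q)), (Nat.leb_spec q M); try lia; ring.
Qed.

Definition ctail p (T : nat -> nat -> C) : C :=
  csum (S p) (fun a => csum (S p) (fun q => if Nat.leb (S p) (a + q) then T a q else C0)).

Lemma cauchy_tail p T :
  csum (S p) (fun a => csum (S p) (T a)) =
  Cadd (csum (S p) (fun k => csum (S k) (fun q => T (k - q)%nat q))) (ctail p T).
Proof.
  rewrite csum_triangle. unfold ctail. rewrite <- csum_add. apply csum_ext; intros a Ha.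
  rewrite <- csum_add. apply csum_ext; intros q Hq.
  destruct (Nat.ltb_spec (a + q) (S p)), (Nat.leb_spec (S p) (a + q)); try lia; ring.
Qed.

Lemma Cmod_ctail_le p T U : (forall a q, Cmod (T a q) <= Cre (U a q)) ->
  Cmod (ctail p T) <= Cre (ctail p U).
Proof.
  intros H. unfold ctail. eapply Rle_trans; [apply Cmod_csum_le|].
  rewrite Cre_csum. apply rsum_le; intros a Ha.
  eapply Rle_trans; [apply Cmod_csum_le|]. rewrite Cre_csum. apply rsum_le; intros q Hq.
  destruct (Nat.leb (S p) (a + q)); auto. rewrite Cmod_C0. simpl; lra.
Qed.

Lemma mpow_1x1 Y k : mpow 1 Y k 0%nat 0%nat = Cpow (Y 0%nat 0%nat) k.
Proof. induction k; [reflexivity|]. simpl mpow. unfold mmul. simpl. rewrite IHk. ring. Qed.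

Definition cexp (c : C) : C := mexp 1 (fun _ _ => c) 0%nat 0%nat.

Lemma cexp_cv c :
  Ccv (fun p => csum (S p) (fun a => Cmul (Cpow c a) (RtoC (/ INR (fact a))))) (cexp c).
Proof.
  eapply Ccv_ext; [|apply (mexp_cv 1 (fun _ _ => c) 0 0); lia].
  intros p. cbv beta. rewrite mexp_partial_csum. apply csum_ext; intros k _.
  unfold mterm, mscale. rewrite mpow_1x1. ring.
Qed.

Lemma Cre_mul_real_csum M K f g :
  Cre (Cmul (csum M (fun k => RtoC (f k))) (csum K (fun k => RtoC (g k)))) = rsum M f * rsum K g.
Proof. simpl. rewrite !Cre_csum, !Cim_csum. simpl. now rewrite !rsum_0, Rmult_0_l, Rminus_0_r. Qed.

(* The tails vanish because the Cauchy product of the series of e^g and e^x sums to e^(g+x). *)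
Lemma exp_ctail_cv g x :
  Un_cv (fun p => Cre (ctail p (fun a q =>
    RtoC (g ^ a * / INR (fact a) * (x ^ q * / INR (fact q)))))) 0.
Proof.
  set (U := fun a q => RtoC (g ^ a * / INR (fact a) * (x ^ q * / INR (fact q)))).
  assert (product : forall p, Cre (csum (S p) (fun a => csum (S p) (U a))) =
    sum_f_R0 (fun k => / INR (fact k) * g ^ k) p * sum_f_R0 (fun k => / INR (fact k) * x ^ k) p).
  { intros p. rewrite <- !rsum_sum_f_R0, <- Cre_mul_real_csum, csum_mul_csum.
    f_equal. apply csum_ext; intros; apply csum_ext; intros. unfold U. Csimpl. }
  assert (diagonal : forall p, Cre (csum (S p) (fun k => csum (S k) (fun q => U (k - q)%nat q))) =
    sum_f_R0 (fun k => / INR (fact k) * (g + x) ^ k) p).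
  { intros p. rewrite <- rsum_sum_f_R0, Cre_csum. apply rsum_ext; intros k Hk.
    transitivity (Cre (mterm 1 (madd (mscale (RtoC g) mid) (fun _ _ => RtoC x)) k 0%nat 0%nat)).
    - rewrite mterm_shift by lia. f_equal. apply csum_ext; intros q Hq.
      unfold prod_term, U. rewrite Cpow_RtoC, mpow_1x1, Cpow_RtoC. Csimpl.
    - unfold mterm, mscale. rewrite mpow_1x1. unfold madd, mscale, mid. simpl.
      replace (Cadd (Cmul (RtoC g) C1) (RtoC x)) with (RtoC (g + x)) by Csimpl.
      rewrite Cpow_RtoC. simpl. ring. }
  apply (Un_cv_ext (fun p =>
    sum_f_R0 (fun k => / INR (fact k) * g ^ k) p * sum_f_R0 (fun k => / INR (fact k) * x ^ k) p
    - sum_f_R0 (fun k => / INR (fact k) * (g + x) ^ k) p)).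
  { intros p. rewrite <- product, <- diagonal, cauchy_tail. cbn [Cre Cadd]. ring. }
  replace 0 with (exp g * exp x - exp (g + x)) by (rewrite exp_plus; ring).
  apply CV_minus; [apply CV_mult|]; apply exp_cv.
Qed.

Lemma Cmod_prod_term_le N c A i j a q : (j < N)%nat ->
  Cmod (prod_term N c A i j a q) <=
  Cmod c ^ a * / INR (fact a) * (matnorm N A ^ q * / INR (fact q)).
Proof.
  intros Hj. unfold prod_term. rewrite !Cmod_mul, Cmod_Cpow, !Cmod_RtoC.
  pose proof (inv_fact_pos a). pose proof (inv_fact_pos q).
  rewrite !Rabs_right by lra.
  pose proof (Cmod_mpow_le N A q i j Hj). pose proof (Cmod_ge0 (mpow N A q i j)).
  assert (0 <= Cmod c ^ a) by apply pow_le, Cmod_ge0.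
  apply Rmult_le_compat; try apply Rmult_le_pos; try lra.
  apply Rmult_le_compat_r; lra.
Qed.

Lemma mexp_shift N c A i j : (i < N)%nat -> (j < N)%nat ->
  mexp N (madd (mscale c mid) A) i j = Cmul (cexp c) (mexp N A i j).
Proof.
  intros Hi Hj. apply mexp_unique; auto.
  apply (Ccv_close _ (fun p => Cmul (csum (S p) (fun a => Cmul (Cpow c a) (RtoC (/ INR (fact a)))))
                                    (mexp_partial N A p i j)) _ _
          (Ccv_mul _ _ _ _ (cexp_cv c) (mexp_cv N A i j Hi Hj)) (exp_ctail_cv (Cmod c) (matnorm N A))).
  intros p. set (T := prod_term N c A i j).
  rewrite !mexp_partial_csum, csum_mul_csum.
  rewrite (csum_ext (S p) (fun k => mterm N (madd (mscale c mid) A) k i j)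
                    (fun k => csum (S k) (fun q => T (k - q)%nat q)))
    by (intros k _; unfold T; now rewrite mterm_shift).
  rewrite (csum_ext (S p) (fun a => csum (S p) (fun q =>
             Cmul (Cmul (Cpow c a) (RtoC (/ INR (fact a)))) (mterm N A q i j))) (fun a => csum (S p) (T a)))
    by (intros; apply csum_ext; intros; unfold T, prod_term, mterm, mscale; ring).
  rewrite cauchy_tail.
  replace (Csub _ _) with (Copp (ctail p T)) by (unfold Csub; ring).
  rewrite Cmod_opp. apply Cmod_ctail_le. intros a q. simpl. now apply Cmod_prod_term_le.
Qed.

Lemma cexp_mul_cexp_opp c : Cmul (cexp c) (cexp (Copp c)) = C1.
Proof.
  unfold cexp at 2. rewrite <- mexp_shift by lia. apply mexp_unique; try lia.
  apply (Ccv_ext (fun _ => C1)); [|apply Ccv_const]. intros p. rewrite mexp_partial_csum.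
  induction p.
  - unfold mterm, mscale. simpl. apply C_ext; simpl; rewrite Rinv_1; ring.
  - rewrite csum_last, <- IHp. unfold mterm, mscale. rewrite mpow_1x1.
    replace (madd (fun i j => Cmul c (mid i j)) (fun _ _ => Copp c) 0%nat 0%nat) with C0
      by Csimpl.
    simpl Cpow. ring.
Qed.

(** * Operator norm *)

Lemma vnorm_eq N v : vnorm N v = sqrt (rsum N (fun k => Cmod (v k) ^ 2)).
Proof. unfold vnorm. now rewrite Cre_csum. Qed.

Lemma vnorm_veq N v w : veq N v w -> vnorm N v = vnorm N w.
Proof. intros H. rewrite !vnorm_eq. f_equal. apply rsum_ext; intros; now rewrite H. Qed.

Lemma vnorm_vscale_ev N x z : (x < N)%nat -> vnorm N (vscale z (ev x)) = Cmod z.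
Proof.
  intros Hx. rewrite vnorm_eq.
  rewrite (rsum_ext _ _ (fun k => if Nat.eqb k x then Cmod z ^ 2 else 0)).
  - rewrite rsum_delta by auto. apply sqrt_pow2, Cmod_ge0.
  - intros k _. unfold vscale, ev. destruct (Nat.eqb k x).
    + now replace (Cmul z C1) with z by ring.
    + replace (Cmul z C0) with C0 by ring. rewrite Cmod_C0. ring.
Qed.

Lemma vnorm_ev N x : (x < N)%nat -> vnorm N (ev x) = 1.
Proof.
  intros Hx. rewrite <- Cmod_C1, <- (vnorm_vscale_ev N x) by auto.
  apply vnorm_veq. intros i _. unfold vscale. ring.
Qed.

Lemma Cmod_entry_le_vnorm N v k : vnorm N v <= 1 -> (k < N)%nat -> Cmod (v k) <= 1.
Proof.
  intros H Hk. rewrite vnorm_eq in H.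
  set (S := rsum N (fun k => Cmod (v k) ^ 2)) in H.
  assert (HS : S <= 1).
  { destruct (Rle_dec S 1) as [|HS]; auto.
    rewrite <- sqrt_1 in H. apply sqrt_le_0 in H; lra. }
  assert (Cmod (v k) ^ 2 <= S)
    by (apply (rsum_term_le N (fun k => Cmod (v k) ^ 2)); auto; intros; apply pow2_ge_0).
  pose proof (Cmod_ge0 (v k)). nra.
Qed.

(* The set defining [opnorm] is bounded by sqrt N * matnorm N A, so its sup exists. *)
Lemma opnorm_ge N A v : vnorm N v <= 1 -> vnorm N (mapply N A v) <= opnorm N A.
Proof.
  intros Hv.
  set (E := fun r => exists v : Vec, vnorm N v <= 1 /\ r = vnorm N (mapply N A v)).
  set (m := matnorm N A).
  assert (Hb : bound E).
  { exists (sqrt (rsum N (fun _ => m ^ 2))). intros r [w [Hw ->]].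
    rewrite vnorm_eq. apply sqrt_le_1_alt. apply rsum_le. intros i Hi.
    assert (Cmod (mapply N A w i) <= m).
    { eapply Rle_trans; [apply Cmod_csum_le|].
      eapply Rle_trans; [apply (rsum_le _ _ (fun k => Cmod (A i k)))|].
      - intros k Hk. rewrite Cmod_mul. pose proof (Cmod_entry_le_vnorm N w k Hw Hk).
        pose proof (Cmod_ge0 (A i k)). pose proof (Cmod_ge0 (w k)). nra.
      - apply (rsum_term_le N (fun i => rsum N (fun k => Cmod (A i k)))); auto.
        intros; apply rsum_ge0; intros; apply Cmod_ge0. }
    pose proof (Cmod_ge0 (mapply N A w i)). nra. }
  assert (He : exists x, E x) by (exists (vnorm N (mapply N A v)), v; auto).
  destruct (completeness E Hb He) as [l Hl].
  assert (Hop : is_lub E (opnorm N A)) by (unfold opnorm; apply epsilon_spec; now exists l).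
  apply Hop. now exists v.
Qed.

(** * Site operators on basis vectors *)

Lemma testbit_ones n m : Nat.testbit (Nat.ones n) m = Nat.ltb m n.
Proof.
  destruct (Nat.ltb_spec m n).
  - now apply Nat.ones_spec_low.
  - now apply Nat.ones_spec_high.
Qed.

Ltac bitcases :=
  repeat match goal with
  | |- context [Nat.eqb ?a ?b] => destruct (Nat.eqb_spec a b)
  | |- context [Nat.ltb ?a ?b] => destruct (Nat.ltb_spec a b)
  end; simpl; rewrite ?andb_false_r, ?andb_true_r, ?orb_false_r, ?orb_true_r; try lia; auto.

Ltac bits := apply Nat.bits_inj; intro m;
  repeat first [rewrite Nat.setbit_eqb | rewrite Nat.clearbit_eqb | rewrite testbit_ones];
  bitcases.

Lemma lt_pow2_of_testbit x n :
  (forall m, (n <= m)%nat -> Nat.testbit x m = false) -> (x < 2 ^ n)%nat.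
Proof.
  intros H. replace x with (x mod 2 ^ n).
  - apply Nat.mod_upper_bound, Nat.pow_nonzero. lia.
  - apply Nat.bits_inj. intro m. destruct (Nat.lt_ge_cases m n).
    + now rewrite Nat.mod_pow2_bits_low.
    + now rewrite Nat.mod_pow2_bits_high, H.
Qed.

Lemma testbit_of_lt_pow2 x n m : (x < 2 ^ n)%nat -> (n <= m)%nat -> Nat.testbit x m = false.
Proof.
  intros H Hm. rewrite <- (Nat.mod_small x (2 ^ n)) by auto.
  now apply Nat.mod_pow2_bits_high.
Qed.

Lemma clearbit_lt_pow2 x n k : (x < 2 ^ n)%nat -> (Nat.clearbit x k < 2 ^ n)%nat.
Proof.
  intros Hx. apply lt_pow2_of_testbit. intros m Hm. rewrite Nat.clearbit_eqb.
  rewrite (testbit_of_lt_pow2 x n m) by auto. bitcases.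
Qed.

Lemma setbit_id x k : Nat.testbit x k = true -> Nat.setbit x k = x.
Proof.
  intros T. apply Nat.bits_inj; intro m. rewrite Nat.setbit_eqb.
  destruct (Nat.eqb_spec k m); subst; simpl; auto.
Qed.

Lemma clearbit_id x k : Nat.testbit x k = false -> Nat.clearbit x k = x.
Proof.
  intros T. apply Nat.bits_inj; intro m. rewrite Nat.clearbit_eqb.
  destruct (Nat.eqb_spec k m); subst; simpl; rewrite ?andb_true_r, ?andb_false_r; auto.
Qed.

Definition flip (x k : nat) : nat :=
  if Nat.testbit x k then Nat.clearbit x k else Nat.setbit x k.

Lemma flip_lt_pow2 x k n : (x < 2 ^ n)%nat -> (k < n)%nat -> (flip x k < 2 ^ n)%nat.
Proof.
  intros Hx Hk. apply lt_pow2_of_testbit. intros m Hm. unfold flip.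
  destruct (Nat.testbit x k); rewrite ?Nat.setbit_eqb, ?Nat.clearbit_eqb;
    rewrite (testbit_of_lt_pow2 x n m) by auto; bitcases.
Qed.

Lemma testbit_flip_neq x k m : k <> m -> Nat.testbit (flip x k) m = Nat.testbit x m.
Proof.
  intros H. unfold flip. destruct (Nat.testbit x k).
  - now apply Nat.clearbit_neq.
  - now apply Nat.setbit_neq.
Qed.

Lemma flip_true x k : Nat.testbit x k = true -> flip x k = Nat.clearbit x k.
Proof. unfold flip; now intros ->. Qed.

Lemma flip_false x k : Nat.testbit x k = false -> flip x k = Nat.setbit x k.
Proof. unfold flip; now intros ->. Qed.

(* Column x of [site_op j s]: the two basis vectors that agree with x off site j. *)
Lemma site_op_entry j s x i :
  site_op j s i x =
  Cadd (if Nat.eqb i (Nat.clearbit x (j - 1)) then s 0%nat (bitv x (j - 1)) else C0)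
       (if Nat.eqb i (Nat.setbit x (j - 1)) then s 1%nat (bitv x (j - 1)) else C0).
Proof.
  unfold site_op. set (k := (j - 1)%nat).
  assert (Hcs : Nat.clearbit x k <> Nat.setbit x k).
  { intros E. apply (f_equal (fun y => Nat.testbit y k)) in E.
    rewrite Nat.clearbit_eq, Nat.setbit_eq in E. discriminate. }
  destruct (Nat.eqb_spec (Nat.clearbit i k) (Nat.clearbit x k)) as [E|E].
  - assert (Hi : i = if Nat.testbit i k then Nat.setbit x k else Nat.clearbit x k).
    { apply Nat.bits_inj; intro m. destruct (Nat.eq_dec k m) as [<-|].
      - destruct (Nat.testbit i k) eqn:T;
          [now rewrite Nat.setbit_eq | now rewrite Nat.clearbit_eq].
      - apply (f_equal (fun y => Nat.testbit y m)) in E.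
        rewrite !Nat.clearbit_neq in E by auto.
        destruct (Nat.testbit i k); rewrite ?Nat.setbit_neq, ?Nat.clearbit_neq; auto. }
    unfold bitv. destruct (Nat.testbit i k); rewrite Hi, Nat.eqb_refl.
    + rewrite (proj2 (Nat.eqb_neq _ _)) by auto. ring.
    + rewrite (proj2 (Nat.eqb_neq _ _)) by auto. ring.
  - assert (i <> Nat.clearbit x k) by (intros ->; apply E; bits).
    assert (i <> Nat.setbit x k) by (intros ->; apply E; bits).
    rewrite !(proj2 (Nat.eqb_neq _ _)) by auto. ring.
Qed.

Section Sites.
Variable n : nat.
Local Notation N := (dimH n).

Lemma site_op_ev j s x : (x < N)%nat ->
  mapply N (site_op j s) (ev x) = fun i =>
  Cadd (if Nat.eqb i (Nat.clearbit x (j - 1)) then s 0%nat (bitv x (j - 1)) else C0)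
       (if Nat.eqb i (Nat.setbit x (j - 1)) then s 1%nat (bitv x (j - 1)) else C0).
Proof.
  intros Hx. rewrite mapply_ev by auto.
  apply functional_extensionality; intros i. apply site_op_entry.
Qed.

Lemma sx_ev j x : (x < N)%nat -> mapply N (sx j) (ev x) = ev (flip x (j - 1)).
Proof.
  intros Hx. unfold sx. rewrite site_op_ev by auto.
  apply functional_extensionality; intros i. unfold bitv, flip, ev.
  destruct (Nat.testbit x (j - 1)); simpl;
  destruct (Nat.eqb i (Nat.clearbit x (j - 1))), (Nat.eqb i (Nat.setbit x (j - 1))); ring.
Qed.

Lemma sy_ev j x : (x < N)%nat ->
  mapply N (sy j) (ev x) = vscale (if Nat.testbit x (j - 1) then Copp Ci else Ci) (ev (flip x (j - 1))).
Proof.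
  intros Hx. unfold sy. rewrite site_op_ev by auto.
  apply functional_extensionality; intros i. unfold bitv, flip, ev, vscale.
  destruct (Nat.testbit x (j - 1)); simpl;
  destruct (Nat.eqb i (Nat.clearbit x (j - 1))), (Nat.eqb i (Nat.setbit x (j - 1))); ring.
Qed.

Lemma sz_ev j x : (x < N)%nat ->
  mapply N (sz j) (ev x) = vscale (if Nat.testbit x (j - 1) then RtoC (-1) else C1) (ev x).
Proof.
  intros Hx. unfold sz. rewrite site_op_ev by auto.
  apply functional_extensionality; intros i. unfold bitv, ev, vscale.
  destruct (Nat.testbit x (j - 1)) eqn:T; simpl.
  - rewrite (setbit_id x _ T).
    destruct (Nat.eqb i (Nat.clearbit x (j - 1))), (Nat.eqb i x); ring.
  - rewrite (clearbit_id x _ T).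
    destruct (Nat.eqb i (Nat.setbit x (j - 1))), (Nat.eqb i x); ring.
Qed.

End Sites.

Definition lower2 : Mat := fun a b => match a, b with 1, 0 => C1 | _, _ => C0 end%nat.
Definition raise2 : Mat := fun a b => match a, b with 0, 1 => C1 | _, _ => C0 end%nat.

Lemma a_op_site j : a_op j = site_op j lower2.
Proof.
  apply functional_extensionality; intros x. apply functional_extensionality; intros i.
  unfold a_op, msub, madd, mscale, sx, sy, site_op.
  destruct (Nat.eqb (Nat.clearbit x (j - 1)) (Nat.clearbit i (j - 1))).
  - unfold bitv. destruct (Nat.testbit x (j - 1)), (Nat.testbit i (j - 1));
      apply C_ext; simpl; field.
  - apply C_ext; simpl; field.
Qed.

Lemma a_star_site j : a_star j = site_op j raise2.
Proof.
  apply functional_extensionality; intros i. apply functional_extensionality; intros x.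
  unfold a_star, madj. rewrite a_op_site. unfold site_op. rewrite Nat.eqb_sym.
  destruct (Nat.eqb (Nat.clearbit i (j - 1)) (Nat.clearbit x (j - 1))).
  - unfold bitv. destruct (Nat.testbit x (j - 1)), (Nat.testbit i (j - 1)); Csimpl.
  - Csimpl.
Qed.

(** * The XY chain on the vacuum and on one-particle states *)

Section Chain.
Variables (lam om : R) (n : nat).
Local Notation N := (dimH n).
Local Notation H := (H_XY lam om n).

(* Every a_j kills bit 1, so the all-ones index is the vacuum of the fermions c_j. *)
Definition vacuum : nat := Nat.ones n.
Definition particle (k : nat) : nat := Nat.clearbit vacuum (k - 1).

Lemma vacuum_lt : (vacuum < N)%nat.
Proof. apply lt_pow2_of_testbit. intros m Hm. unfold vacuum. rewrite testbit_ones. bitcases. Qed.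

Lemma particle_lt k : (particle k < N)%nat.
Proof. apply clearbit_lt_pow2, vacuum_lt. Qed.

Lemma testbit_vacuum m : Nat.testbit vacuum m = Nat.ltb m n.
Proof. apply testbit_ones. Qed.

Lemma testbit_particle k m :
  Nat.testbit (particle k) m = (Nat.ltb m n && negb (Nat.eqb (k - 1) m))%bool.
Proof. unfold particle. now rewrite Nat.clearbit_eqb, testbit_vacuum. Qed.

Lemma a_star_vacuum r : (1 <= r <= n)%nat -> mapply N (a_star r) (ev vacuum) = ev (particle r).
Proof.
  intros Hr. rewrite a_star_site, site_op_ev by apply vacuum_lt.
  apply functional_extensionality; intros i. unfold bitv. rewrite testbit_vacuum.
  destruct (Nat.ltb_spec (r - 1) n); [|lia]. unfold ev, particle.
  destruct (Nat.eqb i (Nat.clearbit vacuum (r - 1))), (Nat.eqb i (Nat.setbit vacuum (r - 1)));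
    simpl; ring.
Qed.

Lemma a_op_vacuum l : (1 <= l <= n)%nat -> mapply N (a_op l) (ev vacuum) = fun _ => C0.
Proof.
  intros Hl. rewrite a_op_site, site_op_ev by apply vacuum_lt.
  apply functional_extensionality; intros i. unfold bitv. rewrite testbit_vacuum.
  destruct (Nat.ltb_spec (l - 1) n); [|lia].
  destruct (Nat.eqb i (Nat.clearbit vacuum (l - 1))), (Nat.eqb i (Nat.setbit vacuum (l - 1)));
    simpl; ring.
Qed.

Lemma a_op_particle l k : (1 <= l <= n)%nat -> (1 <= k <= n)%nat ->
  mapply N (a_op l) (ev (particle k)) = vscale (if Nat.eqb k l then C1 else C0) (ev vacuum).
Proof.
  intros Hl Hk. rewrite a_op_site, site_op_ev by apply particle_lt.
  apply functional_extensionality; intros i. unfold bitv, vscale. rewrite testbit_particle.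
  destruct (Nat.ltb_spec (l - 1) n); [|lia]. simpl.
  destruct (Nat.eqb_spec k l) as [->|].
  - rewrite Nat.eqb_refl. simpl.
    replace (Nat.setbit (particle l) (l - 1)) with vacuum by (unfold particle, vacuum; bits).
    unfold ev. destruct (Nat.eqb i (Nat.clearbit (particle l) (l - 1))), (Nat.eqb i vacuum); ring.
  - destruct (Nat.eqb_spec (k - 1) (l - 1)); [lia|]. simpl.
    destruct (Nat.eqb i (Nat.clearbit (particle k) (l - 1))),
      (Nat.eqb i (Nat.setbit (particle k) (l - 1))); ring.
Qed.

Lemma zstring_vacuum m : (m <= n)%nat ->
  mapply N (zstring n m) (ev vacuum) = vscale (sg m) (ev vacuum).
Proof.
  induction m; intros Hm; simpl zstring.
  - rewrite mapply_ev by apply vacuum_lt.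
    apply functional_extensionality; intros i. unfold mid, ev, vscale, sg.
    rewrite Nat.eqb_sym. destruct (Nat.eqb i vacuum); Csimpl.
  - rewrite mapply_mmul, sz_ev by apply vacuum_lt.
    replace (S m - 1)%nat with m by lia. rewrite testbit_vacuum.
    destruct (Nat.ltb_spec m n); [|lia].
    rewrite mapply_vscale, IHm by lia.
    apply functional_extensionality; intros i. unfold vscale, sg. Csimpl.
Qed.

Lemma c_op_vacuum l : (1 <= l <= n)%nat -> mapply N (c_op n l) (ev vacuum) = fun _ => C0.
Proof. intros Hl. unfold c_op. now rewrite mapply_mmul, a_op_vacuum, mapply_zero. Qed.

Lemma c_op_particle l k : (1 <= l <= n)%nat -> (1 <= k <= n)%nat ->
  mapply N (c_op n l) (ev (particle k)) = vscale (if Nat.eqb k l then sg (l - 1) else C0) (ev vacuum).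
Proof.
  intros Hl Hk. unfold c_op.
  rewrite mapply_mmul, a_op_particle, mapply_vscale, zstring_vacuum by lia.
  apply functional_extensionality; intros i. unfold vscale. destruct (Nat.eqb k l); ring.
Qed.

Definition hop (j : nat) : Mat := madd (mmul N (sx j) (sx (S j))) (mmul N (sy j) (sy (S j))).

Definition potential : Mat := msumf n (fun i => mscale (RtoC (V lam om (S i))) (sz (S i))).

Lemma H_XY_eq : H = madd (mscale (RtoC (-1)) (msumf (n - 1) (fun i => hop (S i)))) potential.
Proof. reflexivity. Qed.

Lemma hop_ev j y : (1 <= j)%nat -> (j < n)%nat -> (y < N)%nat ->
  mapply N (hop j) (ev y) =
  vscale (if Bool.eqb (Nat.testbit y (j - 1)) (Nat.testbit y j) then C0 else RtoC 2)
         (ev (flip (flip y j) (j - 1))).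
Proof.
  intros Hj Hjn Hy. unfold hop. rewrite mapply_madd, !mapply_mmul.
  rewrite sx_ev, sy_ev by auto. replace (S j - 1)%nat with j by lia.
  assert (Hf : (flip y j < N)%nat) by (apply flip_lt_pow2; auto).
  rewrite sx_ev, mapply_vscale, sy_ev, testbit_flip_neq by (auto; lia).
  apply functional_extensionality; intros i. unfold vscale.
  destruct (Nat.testbit y (j - 1)), (Nat.testbit y j); simpl; Csimpl.
Qed.

Lemma potential_ev y : (y < N)%nat ->
  mapply N potential (ev y) =
  vscale (csum n (fun a => Cmul (RtoC (V lam om (S a))) (if Nat.testbit y a then RtoC (-1) else C1)))
         (ev y).
Proof.
  intros Hy. unfold potential. rewrite mapply_msumf.
  apply functional_extensionality; intros i. unfold vscale.
  rewrite <- csum_mul_r. apply csum_ext; intros a Ha.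
  rewrite mapply_mscale, sz_ev by auto. replace (S a - 1)%nat with a by lia.
  unfold vscale. ring.
Qed.

Definition vacuum_energy : C := csum n (fun a => RtoC (- V lam om (S a))).

Lemma H_vacuum : mapply N H (ev vacuum) = vscale vacuum_energy (ev vacuum).
Proof.
  rewrite H_XY_eq, mapply_madd, mapply_mscale, mapply_msumf, potential_ev by apply vacuum_lt.
  apply functional_extensionality; intros i. unfold vscale.
  rewrite csum_eq_0.
  - replace (csum n _) with vacuum_energy; [ring|].
    apply csum_ext; intros a Ha. rewrite testbit_vacuum.
    destruct (Nat.ltb_spec a n); [Csimpl|lia].
  - intros a Ha. rewrite hop_ev by (auto using vacuum_lt; lia). rewrite !testbit_vacuum.
    destruct (Nat.ltb_spec (S a - 1) n), (Nat.ltb_spec (S a) n); try lia.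
    unfold vscale. simpl. ring.
Qed.

Lemma hop_particle a k : (S a < n)%nat -> (1 <= k <= n)%nat ->
  mapply N (hop (S a)) (ev (particle k)) = fun i =>
  Cadd (if Nat.eqb a (k - 1) then Cmul (RtoC 2) (ev (particle (S k)) i) else C0)
       (if Nat.eqb (S a) (k - 1) then Cmul (RtoC 2) (ev (particle (k - 1)) i) else C0).
Proof.
  intros Ha Hk. rewrite hop_ev by (auto using particle_lt; lia).
  replace (S a - 1)%nat with a by lia. rewrite !testbit_particle.
  destruct (Nat.ltb_spec a n), (Nat.ltb_spec (S a) n); try lia. cbn [andb].
  apply functional_extensionality; intros i. unfold vscale.
  destruct (Nat.eqb_spec a (k - 1)), (Nat.eqb_spec (S a) (k - 1)),
    (Nat.eqb_spec (k - 1) a), (Nat.eqb_spec (k - 1) (S a)); try lia; cbn [negb Bool.eqb].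
  - rewrite (flip_true (particle k) (S a)) by (rewrite testbit_particle; bitcases).
    rewrite (flip_false _ a) by (rewrite Nat.clearbit_neq, testbit_particle by lia; bitcases).
    replace (Nat.setbit (Nat.clearbit (particle k) (S a)) a) with (particle (S k))
      by (unfold particle, vacuum; bits).
    ring.
  - rewrite (flip_false (particle k) (S a)) by (rewrite testbit_particle; bitcases).
    rewrite (flip_true _ a) by (rewrite Nat.setbit_neq, testbit_particle by lia; bitcases).
    replace (Nat.clearbit (Nat.setbit (particle k) (S a)) a) with (particle (k - 1))
      by (unfold particle, vacuum; bits).
    ring.
  - ring.
Qed.

Lemma H_particle k : (1 <= k <= n)%nat ->
  mapply N H (ev (particle k)) = fun i =>
  Cadd (Cmul (RtoC (-1)) (Cadd (if Nat.ltb k n then Cmul (RtoC 2) (ev (particle (S k)) i) else C0)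
                               (if Nat.leb 2 k then Cmul (RtoC 2) (ev (particle (k - 1)) i) else C0)))
       (Cmul (Cadd vacuum_energy (RtoC (2 * V lam om k))) (ev (particle k) i)).
Proof.
  intros Hk.
  rewrite H_XY_eq, mapply_madd, mapply_mscale, mapply_msumf, potential_ev by apply particle_lt.
  apply functional_extensionality; intros i. unfold vscale. f_equal.
  - f_equal. rewrite (csum_ext _ _ (fun a =>
      Cadd (if Nat.eqb a (k - 1) then Cmul (RtoC 2) (ev (particle (S k)) i) else C0)
           (if Nat.eqb (S a) (k - 1) then Cmul (RtoC 2) (ev (particle (k - 1)) i) else C0)))
      by (intros a Ha; now rewrite hop_particle by lia).
    rewrite csum_add, csum_delta. f_equal.
    + destruct (Nat.ltb_spec (k - 1) (n - 1)), (Nat.ltb_spec k n); try lia; auto.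
    + destruct (Nat.leb_spec 2 k).
      * rewrite (csum_ext _ _ (fun a => if Nat.eqb a (k - 2) then
                   Cmul (RtoC 2) (ev (particle (k - 1)) i) else C0)).
        -- now rewrite csum_delta_lt by lia.
        -- intros a Ha. destruct (Nat.eqb_spec (S a) (k - 1)), (Nat.eqb_spec a (k - 2));
             try lia; auto.
      * apply csum_eq_0. intros a Ha. destruct (Nat.eqb_spec (S a) (k - 1)); try lia; auto.
  - f_equal. unfold vacuum_energy.
    rewrite (csum_ext _ _ (fun a => Cadd (RtoC (- V lam om (S a)))
                (if Nat.eqb a (k - 1) then RtoC (2 * V lam om (S a)) else C0))).
    + rewrite csum_add, csum_delta_lt by lia. now replace (S (k - 1)) with k by lia.
    + intros a Ha. rewrite testbit_particle. destruct (Nat.ltb_spec a n); [|lia].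
      rewrite Nat.eqb_sym. destruct (Nat.eqb a (k - 1)); simpl; Csimpl.
Qed.

(* The sign (-1)^j turns the hopping amplitude -2 of H_XY into the +2 of 2 H_n(omega). *)
Definition particle_vec (j : nat) : Vec := vscale (sg (S j)) (ev (particle (S j))).

Definition H_one_particle : Mat := madd (mscale vacuum_energy mid) (mscale (RtoC 2) (Hn lam om n)).

Lemma H_particle_vec j : (j < n)%nat ->
  veq N (mapply N H (particle_vec j)) (vcomb n H_one_particle particle_vec j).
Proof.
  intros Hj i _. unfold particle_vec at 1. rewrite mapply_vscale, H_particle by lia.
  unfold vcomb, vscale.
  rewrite (csum_ext _ _ (fun a => Cadd (Cadd
      (if Nat.eqb a j then Cmul (Cadd vacuum_energy (RtoC (2 * V lam om (S a)))) (particle_vec a i) else C0)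
      (if Nat.eqb a (S j) then Cmul (RtoC 2) (particle_vec a i) else C0))
      (if Nat.eqb (S a) j then Cmul (RtoC 2) (particle_vec a i) else C0))).
  2:{ intros a Ha. unfold H_one_particle, madd, mscale, mid, Hn.
      destruct (Nat.eqb_spec a j), (Nat.eqb_spec a (S j)), (Nat.eqb_spec (S a) j),
        (Nat.eqb_spec j (S a)); try lia; simpl; Csimpl. }
  rewrite !csum_add, csum_delta_lt, csum_delta by auto.
  destruct j as [|j].
  - rewrite csum_eq_0 by (intros a _; destruct (Nat.eqb_spec (S a) 0); [lia|auto]).
    simpl (1 - 1)%nat. simpl (Nat.leb 2 1).
    unfold particle_vec, vscale. destruct (Nat.ltb_spec 1 n); try lia; rewrite ?sg_S; Csimpl.
  - rewrite (csum_ext _ _ (fun a => if Nat.eqb a j then Cmul (RtoC 2) (particle_vec a i) else C0))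
      by (intros a _; destruct (Nat.eqb_spec (S a) (S j)), (Nat.eqb_spec a j); try lia; auto).
    rewrite csum_delta_lt by lia. replace (S (S j) - 1)%nat with (S j) by lia.
    destruct (Nat.leb_spec 2 (S (S j))); [|lia].
    unfold particle_vec, vscale. destruct (Nat.ltb_spec (S (S j)) n); rewrite ?sg_S; Csimpl.
Qed.

Lemma mexp_vacuum s :
  veq N (mapply N (mexp N (mscale s H)) (ev vacuum)) (vscale (cexp (Cmul s vacuum_energy)) (ev vacuum)).
Proof.
  assert (family : forall k, (k < 1)%nat -> veq N (mapply N H (ev vacuum))
                     (vcomb 1 (fun _ _ => vacuum_energy) (fun _ => ev vacuum) k)).
  { intros k _ i _. rewrite H_vacuum. unfold vcomb, vscale. simpl. ring. }
  intros i Hi.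
  rewrite (mexp_family N 1 H (fun _ _ => vacuum_energy) (fun _ => ev vacuum) s family 0) by lia.
  unfold vcomb, vscale, cexp, mscale. simpl. ring.
Qed.

End Chain.

(** * The commutator on the vacuum *)

Section Commutator.
Variables (lam om t : R) (n l r : nat).
Hypotheses (hl : (1 <= l < n)%nat) (hr : (l < r <= n)%nat).
Local Notation N := (dimH n).
Local Notation H := (H_XY lam om n).
Local Notation vac := (ev (vacuum n)).
Local Notation E := (mexp n (mscale (mkC 0 (-2 * t)) (Hn lam om n))).

Lemma mexp_H_one_particle s a b : (a < n)%nat -> (b < n)%nat ->
  mexp n (mscale s (H_one_particle lam om n)) a b =
  Cmul (cexp (Cmul s (vacuum_energy lam om n))) (mexp n (mscale (Cmul s (RtoC 2)) (Hn lam om n)) a b).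
Proof.
  intros Ha Hb. rewrite <- mexp_shift by auto. do 3 f_equal.
  apply functional_extensionality; intro i; apply functional_extensionality; intro j.
  unfold H_one_particle, mscale, madd. ring.
Qed.

Lemma tau_c_op_vacuum : mapply N (tau lam om n t (c_op n l)) vac = fun _ => C0.
Proof.
  unfold tau. rewrite !mapply_mmul, (mapply_veq _ _ _ _ (mexp_vacuum lam om n _)).
  rewrite !mapply_vscale, c_op_vacuum, mapply_zero by lia.
  apply functional_extensionality; intros i. unfold vscale. ring.
Qed.

Lemma c_op_evolved_particle :
  mapply N (c_op n l) (mapply N (mexp N (mscale (mkC 0 (- t)) H)) (ev (particle n r))) =
  vscale (Copp (Cmul (sg r) (mexp n (mscale (mkC 0 (- t)) (H_one_particle lam om n))
                                 (l - 1)%nat (r - 1)%nat))) vac.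
Proof.
  set (s := mkC 0 (- t)). set (E' := mexp n (mscale s (H_one_particle lam om n))).
  assert (Hr : ev (particle n r) = vscale (sg r) (particle_vec n (r - 1))).
  { apply functional_extensionality; intros i. unfold particle_vec, vscale.
    replace (S (r - 1)) with r by lia.
    transitivity (Cmul (Cmul (sg r) (sg r)) (ev (particle n r) i)); [|ring].
    rewrite sg_mul_sg. ring. }
  rewrite Hr, !mapply_vscale.
  rewrite (mapply_veq N (c_op n l) _ (vcomb n E' (particle_vec n) (r - 1)))
    by (apply mexp_family; [apply H_particle_vec | lia]).
  unfold vcomb. rewrite mapply_csum.
  apply functional_extensionality; intros i. unfold vscale.
  rewrite (csum_ext _ _ (fun j => if Nat.eqb j (l - 1) then
      Cmul (E' j (r - 1)%nat) (Cmul (sg (S j)) (Cmul (sg (l - 1)) (vac i))) else C0)).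
  - rewrite csum_delta_lt by lia. replace (S (l - 1)) with l by lia.
    replace l with (S (l - 1)) at 2 by lia. rewrite sg_S.
    transitivity (Cmul (Cmul (sg (l - 1)) (sg (l - 1))) (Cmul (RtoC (-1))
                    (Cmul (sg r) (Cmul (E' (l - 1) (r - 1))%nat (vac i))))); [ring|].
    rewrite sg_mul_sg. Csimpl.
  - intros j Hj. unfold particle_vec. rewrite mapply_vscale, c_op_particle by lia.
    unfold vscale. destruct (Nat.eqb_spec (S j) l), (Nat.eqb_spec j (l - 1)); try lia; ring.
Qed.

(* The phases e^(-it E_0) and e^(it E_0) picked up on the way out and back cancel. *)
Lemma comm_tau_vacuum :
  veq N (mapply N (comm N (tau lam om n t (c_op n l)) (a_star r)) vac)
        (vscale (Copp (Cmul (sg r) (E (l - 1)%nat (r - 1)%nat))) vac).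
Proof.
  intros i Hi. unfold comm, msub. rewrite mapply_madd, mapply_mscale, !mapply_mmul.
  rewrite tau_c_op_vacuum, mapply_zero, a_star_vacuum by lia.
  unfold tau. rewrite !mapply_mmul, c_op_evolved_particle, mapply_vscale.
  unfold vscale. rewrite (mexp_vacuum lam om n _ i Hi).
  rewrite mexp_H_one_particle by lia.
  replace (Cmul (mkC 0 (- t)) (RtoC 2)) with (mkC 0 (-2 * t)) by Csimpl.
  pose proof (cexp_mul_cexp_opp (Cmul (mkC 0 t) (vacuum_energy lam om n))) as phases.
  replace (Copp (Cmul (mkC 0 t) (vacuum_energy lam om n)))
    with (Cmul (mkC 0 (- t)) (vacuum_energy lam om n)) in phases by Csimpl.
  unfold vscale. transitivity (Cmul (Cmul (cexp (Cmul (mkC 0 t) (vacuum_energy lam om n)))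
    (cexp (Cmul (mkC 0 (- t)) (vacuum_energy lam om n)))) (Cmul (Copp (Cmul (sg r) (E (l - 1)%nat (r - 1)%nat))) (vac i))); [ring|].
  rewrite phases. ring.
Qed.

End Commutator.

Theorem lemma4p1 (lam : R) (hlam : 0 < lam) (n : nat) (hn : (2 <= n)%nat)
  (om : R) (hom : 0 <= om < 1) (l r : nat) (hl : (1 <= l < n)%nat)
  (hr : (l < r <= n)%nat) (t : R) :
  opnorm (dimH n) (comm (dimH n) (tau lam om n t (c_op n l)) (a_star r))
  >= Cmod (mexp n (mscale (mkC 0 (-2 * t)) (Hn lam om n)) (l - 1)%nat (r - 1)%nat).
Proof.
  apply Rle_ge.
  rewrite <- (Rmult_1_l (Cmod _)), <- (Cmod_sg r), <- Cmod_mul, <- Cmod_opp,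
    <- (vnorm_vscale_ev (dimH n) (vacuum n)) by apply vacuum_lt.
  rewrite <- (vnorm_veq _ _ _ (comm_tau_vacuum lam om t n l r hl hr)).
  apply opnorm_ge. rewrite vnorm_ev by apply vacuum_lt. lra.
Qed.
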